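(* Let $f_{X,Z}$ be a Gaussian latent machine, i.e. $f_{X,Z}(x,z)\propto\prod_{i=1}^m\mathcal{N}\big((Kx)_i;\mu_i(z_i),\sigma_i^2(z_i)\big)\,f_i(z_i)$ with $K\in\mathbb{R}^{m\times n}$, $m\ge n$, of full column rank. Then the marginal density $f_X$ of $X$ is a Gaussian mixture on $\mathbb{R}^n$ of the form $f_X(x)=\int_{\mathcal{Z}}f_Z(z)\cdot\mathcal{N}\big(x;\mu(z),\Sigma(z)\big)\,\mathrm{d}z$, where $f_Z$ is the marginal density of $Z$, $\Sigma(z):=\big(K^\top\Sigma_0^{-1}(z)K\big)^{-1}$ and $\mu(z):=\Sigma(z)K^\top\Sigma_0^{-1}(z)\mu_0(z)$.
   Context: A Gaussian latent machine: $X\in\mathbb{R}^n$, $Z=(Z_1,\dots,Z_m)\in\mathcal{Z}=\mathcal{Z}_1\times\cdots\times\mathcal{Z}_m$, $f_i$ univariate densities on $\mathcal{Z}_i$, $\mu_i:\mathcal{Z}_i\to\mathbb{R}$, $\sigma_i^2:\mathcal{Z}_i\to(0,\infty)$, and $\mathcal{N}(\cdot;\mu,\Sigma)$ the (multivariate) normal density. $\mu_0(z):=(\mu_1(z_1),\dots,\mu_m(z_m))$, $\Sigma_0(z):=\operatorname{diag}(\sigma_1^2(z_1),\dots,\sigma_m^2(z_m))$. *)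

From HB Require Import structures.
From mathcomp Require Import all_boot all_order all_algebra.
From mathcomp Require Import all_classical all_reals all_analysis.
Set Implicit Arguments. Unset Strict Implicit. Unset Printing Implicit Defensive.
Import Order.TTheory GRing.Theory Num.Theory.
Local Open Scope classical_set_scope.
Local Open Scope ring_scope.

Section GLM.
Variable R : realType.

(* The first coordinate is the
   outermost integration variable. *)
Fixpoint iint (n : nat) : ('I_n -> set R) -> ('cV[R]_n -> \bar R) -> \bar R :=
  match n with
  | 0 => fun _ g => g 0
  | k.+1 => fun A g =>
      (\int[@lebesgue_measure R]_(t in A ord0)
         iint (fun i : 'I_k => A (lift ord0 i))
              (fun v : 'cV[R]_k => g (col_mx (t%:M : 'M[R]_1) v)))%E
  end.

Definition gauss_pdf (n : nat) (mu : 'cV[R]_n) (S : 'M[R]_n) (x : 'cV[R]_n) : R :=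
  (Num.sqrt ((pi *+ 2) ^+ n * \det S))^-1 *
  expR (- (((x - mu)^T *m invmx S *m (x - mu)) 0 0) / 2).

(* Univariate normal density N(y; mu, s2) with variance s2 (library normal_pdf
   is parameterised by the standard deviation). *)
Definition gauss1_pdf (mu s2 y : R) : R := normal_pdf mu (Num.sqrt s2) y.

Variables (m n : nat).

Definition mu0 (mu : 'I_m -> R -> R) (z : 'cV[R]_m) : 'cV[R]_m :=
  \col_i mu i (z i 0).
Definition Sigma0 (s2 : 'I_m -> R -> R) (z : 'cV[R]_m) : 'M[R]_m :=
  diag_mx (\row_i s2 i (z i 0)).

Definition glm_cov (K : 'M[R]_(m, n)) s2 z : 'M[R]_n :=
  invmx (K^T *m invmx (Sigma0 s2 z) *m K).
Definition glm_mean (K : 'M[R]_(m, n)) mu s2 z : 'cV[R]_n :=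
  glm_cov K s2 z *m K^T *m invmx (Sigma0 s2 z) *m mu0 mu z.

Definition glm_weight (K : 'M[R]_(m, n)) (mu s2 f : 'I_m -> R -> R)
    (x : 'cV[R]_n) (z : 'cV[R]_m) : R :=
  \prod_(i < m) (gauss1_pdf (mu i (z i 0)) (s2 i (z i 0)) ((K *m x) i 0) * f i (z i 0)).

Definition glm_mass K (Zs : 'I_m -> set R) mu s2 f : \bar R :=
  iint (fun _ => [set: R]) (fun x => iint Zs (fun z => (glm_weight K mu s2 f x z)%:E)).

Definition glm_joint K Zs mu s2 f x z : \bar R :=
  (glm_weight K mu s2 f x z / fine (glm_mass K Zs mu s2 f))%:E.
Definition glm_marginal_X K Zs mu s2 f (x : 'cV[R]_n) : \bar R :=
  iint Zs (fun z => glm_joint K Zs mu s2 f x z).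
Definition glm_marginal_Z K Zs mu s2 f (z : 'cV[R]_m) : \bar R :=
  iint (fun _ => [set: R]) (fun x => glm_joint K Zs mu s2 f x z).

End GLM.

From HB Require Import structures.
From mathcomp Require Import all_boot all_order all_algebra.
From mathcomp Require Import all_classical all_reals all_analysis.
From mathcomp Require Import ring measurable_realfun.
Set Implicit Arguments. Unset Strict Implicit. Unset Printing Implicit Defensive.
Import Order.TTheory GRing.Theory Num.Theory.
Local Open Scope classical_set_scope.
Local Open Scope ring_scope.

(* For fixed z, completing the square writes the weight
   x |-> prod_i N((Kx)_i; mu_i(z_i), s2_i(z_i)) f_i(z_i) as
   W(z) exp(-(x - mu(z))^T P (x - mu(z)) / 2) with P = K^T Sigma_0(z)^-1 K,
   which is positive definite because K has full column rank.  Integrating in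
   x gives f_Z(z) = W(z) sqrt((2 pi)^n / det P) / mass, exactly the normalising
   factor of N(x; mu(z), P^-1); hence f_{X,Z}(x, z) = f_Z(z) N(x; mu(z), Sigma(z))
   pointwise in z, and integrating over z gives the claim.  The Gaussian
   integral over R^n is computed one coordinate at a time: the Schur complement
   of the first diagonal entry of P splits the form into a one-dimensional
   square plus a positive definite form in the remaining coordinates, and
   det P is the Schur complement times the determinant of that block. *)

Definition bform {R : realType} {n : nat} (A : 'M[R]_n) (x y : 'cV[R]_n) : R :=
  (x^T *m A *m y) 0 0.
Definition qform {R : realType} {n : nat} (A : 'M[R]_n) (x : 'cV[R]_n) : R :=
  bform A x x.
Definition posdef {R : realType} {n : nat} (A : 'M[R]_n) : Prop :=
  forall x, x != 0 -> 0 < qform A x.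

Section QuadraticForm.
Variables (R : realType) (n : nat).
Implicit Types (A : 'M[R]_n) (x y : 'cV[R]_n).

Lemma bform_sym A x y : A^T = A -> bform A x y = bform A y x.
Proof.
move=> sA; have trmx11 (M : 'M[R]_1) : M 0 0 = M^T 0 0 by rewrite mxE.
by rewrite /bform trmx11 !trmx_mul trmxK sA mulmxA.
Qed.

Lemma bformDl A x y z : bform A (x + y) z = bform A x z + bform A y z.
Proof. by rewrite /bform linearD /= !mulmxDl mxE. Qed.

Lemma bformDr A x y z : bform A z (x + y) = bform A z x + bform A z y.
Proof. by rewrite /bform !mulmxDr mxE. Qed.

Lemma bformZl A a x z : bform A (a *: x) z = a * bform A x z.
Proof. by rewrite /bform linearZ /= -!scalemxAl mxE. Qed.

Lemma bformZr A a x z : bform A z (a *: x) = a * bform A z x.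
Proof. by rewrite /bform -!scalemxAr mxE. Qed.

Lemma bformNr A x z : bform A z (- x) = - bform A z x.
Proof. by rewrite -scaleN1r bformZr mulN1r. Qed.

Lemma qform0 A : qform A 0 = 0.
Proof. by rewrite /qform /bform mulmx0 mxE. Qed.

Lemma qformD A x y : A^T = A ->
  qform A (x + y) = qform A x + bform A x y *+ 2 + qform A y.
Proof.
by move=> sA; rewrite /qform bformDl !bformDr (bform_sym y x sA) mulr2n addrA addrA.
Qed.

Lemma qformZ A a x : qform A (a *: x) = a ^+ 2 * qform A x.
Proof. by rewrite /qform bformZl bformZr mulrA expr2. Qed.

Lemma qformN A x : qform A (- x) = qform A x.
Proof. by rewrite -scaleN1r qformZ sqrrN expr1n mul1r. Qed.

Lemma qform_congr m (A : 'M[R]_m) (B : 'M[R]_(m, n)) x :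
  qform (B^T *m A *m B) x = qform A (B *m x).
Proof. by rewrite /qform /bform trmx_mul !mulmxA. Qed.

Lemma trmx_congr m (A : 'M[R]_m) (B : 'M[R]_(m, n)) :
  A^T = A -> (B^T *m A *m B)^T = B^T *m A *m B.
Proof. by move=> sA; rewrite !trmx_mul trmxK sA mulmxA. Qed.

Lemma posdef_congr m (A : 'M[R]_m) (B : 'M[R]_(m, n)) :
  posdef A -> \rank B = n -> posdef (B^T *m A *m B).
Proof.
move=> pA rB x x0; rewrite qform_congr; apply: pA; apply: contra x0 => /eqP Bx0.
have fBT : row_free B^T by rewrite /row_free mxrank_tr rB.
by rewrite -trmx_eq0 -(mulmx_free_eq0 _ fBT) -trmx_mul Bx0 trmx0.
Qed.

Lemma posdef_diag_mx (d : 'rV[R]_n) : (forall i, 0 < d 0 i) -> posdef (diag_mx d).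
Proof.
move=> d_gt0 x x0.
have -> : qform (diag_mx d) x = \sum_i d 0 i * x i 0 ^+ 2.
  rewrite /qform /bform mul_mx_diag mxE; apply: eq_bigr => i _.
  by rewrite !mxE; ring.
have [i xi0|x_eq0] := pickP (fun i => x i 0 != 0); last first.
  by move/eqP: x0; case; apply/matrixP => i j; rewrite ord1 mxE; apply/eqP/negbFE/x_eq0.
rewrite (bigD1 i) //=; apply: ltr_pwDl; first by rewrite mulr_gt0 ?exprn_even_gt0.
by apply: sumr_ge0 => j _; rewrite mulr_ge0 ?sqr_ge0 ?ltW.
Qed.

Lemma posdef_unitmx A : posdef A -> A \in unitmx.
Proof.
move=> pA; rewrite unitmxE unitfE; apply/negP => /det0P [v v0 vA].
have := pA v^T; rewrite trmx_eq0 => /(_ v0).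
by rewrite /qform /bform trmxK vA mul0mx mxE ltxx.
Qed.

End QuadraticForm.

Section CompleteSquare.
Variables (R : realType) (m n : nat).
Variables (E : 'M[R]_m) (B : 'M[R]_(m, n)) (c : 'cV[R]_m).
Hypotheses (sE : E^T = E) (uP : B^T *m E *m B \in unitmx).
Let P := B^T *m E *m B.
Let mean := invmx P *m B^T *m E *m c.

Lemma bform_mean x : bform P x mean = bform E (B *m x) c.
Proof.
have -> : mean = invmx P *m (B^T *m E *m c) by rewrite /mean !mulmxA.
by rewrite /bform -(mulmxA x^T) mulKVmx // trmx_mul !mulmxA.
Qed.

Lemma qform_complete_square x :
  qform E (B *m x - c) = qform P (x - mean) + (qform E c - qform P mean).
Proof.
by rewrite !qformD ?trmx_congr // !qformN !bformNr -qform_congr bform_mean; ring.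
Qed.

End CompleteSquare.

Section SchurComplement.
Variables (R : realType) (n : nat) (P : 'M[R]_(1 + n)).
Hypothesis sP : P^T = P.
Let a := ulsubmx P 0 0.
Let C := dlsubmx P.
Let D := drsubmx P.

Lemma ursubmx_sym : ursubmx P = C^T.
Proof. by rewrite /C -{1}sP -trmx_dlsub. Qed.

Lemma drsubmx_sym : D^T = D.
Proof. by rewrite /D trmx_drsub sP. Qed.

Lemma qform_col_mx (t : R) (y : 'cV[R]_n) :
  qform P (col_mx t%:M y) = t ^+ 2 * a + (t * (y^T *m C) 0 0) *+ 2 + qform D y.
Proof.
rewrite /qform /bform tr_col_mx tr_scalar_mx -[in LHS](submxK P) ursubmx_sym.
rewrite mul_row_block mul_row_col !mulmxDl !mul_scalar_mx !mul_mx_scalar -!scalemxAl.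
have entryD (M N : 'M[R]_1) : (M + N) 0 0 = M 0 0 + N 0 0 by rewrite mxE.
have entryZ (c : R) (M : 'M[R]_1) : (c *: M) 0 0 = c * M 0 0 by rewrite mxE.
rewrite !entryD !entryZ.
have -> : (C^T *m y) 0 0 = (y^T *m C) 0 0.
  have trmx11 (M : 'M[R]_1) : M^T 0 0 = M 0 0 by rewrite mxE.
  by rewrite -trmx11 trmx_mul trmxK.
rewrite -/a -/C -/D; ring.
Qed.

Hypothesis pP : posdef P.

Lemma posdef_drsubmx : posdef D.
Proof.
move=> y y0; have y0P : col_mx 0%:M y != 0 by rewrite col_mx_eq0 negb_and y0 orbT.
by have := pP y0P; rewrite qform_col_mx expr0n /= !mul0r mul0rn !add0r.
Qed.

Lemma unitmx_drsubmx : D \in unitmx.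
Proof. exact/posdef_unitmx/posdef_drsubmx. Qed.

Definition schur_shift : 'cV[R]_n := invmx D *m C.
Definition schur : R := a - (C^T *m schur_shift) 0 0.

Lemma qform_col_mx_schur (t : R) y :
  qform P (col_mx t%:M y) = t ^+ 2 * schur + qform D (y + t *: schur_shift).
Proof.
rewrite qform_col_mx qformD ?drsubmx_sym // qformZ bformZr.
have -> : bform D y schur_shift = (y^T *m C) 0 0.
  by rewrite /bform /schur_shift -mulmxA mulKVmx ?unitmx_drsubmx.
have -> : qform D schur_shift = (C^T *m schur_shift) 0 0.
  rewrite /qform /bform {1}/schur_shift trmx_mul trmx_inv drsubmx_sym.
  by rewrite -!mulmxA mulKmx ?unitmx_drsubmx.
rewrite /schur; ring.
Qed.

Lemma schur_gt0 : 0 < schur.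
Proof.
have v0 : col_mx 1%:M (- schur_shift) != 0 by rewrite col_mx_eq0 negb_and matrix_nonzero1.
by have := pP v0; rewrite qform_col_mx_schur scale1r addNr qform0 expr1n mul1r addr0.
Qed.

Lemma det_schur : \det P = schur * \det D.
Proof.
have eliminate : block_mx 1%:M (- schur_shift^T) 0 1%:M *m P
    = block_mx (@scalar_mx R 1 schur) 0 C D.
  rewrite -{1}[P]submxK mulmx_block !mul1mx !mul0mx !add0r ursubmx_sym !mulNmx.
  have -> : schur_shift^T *m D = C^T.
    by rewrite /schur_shift trmx_mul trmx_inv drsubmx_sym mulmxKV ?unitmx_drsubmx.
  rewrite addrN; congr block_mx.
  apply/matrixP => i j; rewrite !ord1 /schur !mxE eqxx mulr1n.
  congr (_ - _); first by rewrite /a !mxE.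
  by apply: eq_bigr => k _; rewrite !mxE mulrC.
move/(congr1 determinant): eliminate.
by rewrite det_mulmx det_ublock !det1 !mul1r det_lblock det_mx11 mxE eqxx mulr1n.
Qed.

Lemma qform_col_mx_sub (mu : 'cV[R]_(1 + n)) (t : R) (v : 'cV[R]_n) :
  let b := usubmx mu 0 0 in
  qform P (col_mx t%:M v - mu)
  = (t - b) ^+ 2 * schur + qform D (v - (dsubmx mu - (t - b) *: schur_shift)).
Proof.
move=> b; rewrite -[mu in LHS]vsubmxK (mx11_scalar (usubmx mu)) -/b.
rewrite opp_col_mx add_col_mx -raddfB qform_col_mx_schur.
by rewrite opprB addrA addrAC.
Qed.

End SchurComplement.

Lemma posdef_det_gt0 (R : realType) (n : nat) (P : 'M[R]_n) :
  P^T = P -> posdef P -> 0 < \det P.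
Proof.
elim: n P => [|n IH] P sP pP; first by rewrite det_mx00.
rewrite (det_schur sP pP) mulr_gt0 ?schur_gt0 //.
exact: IH (drsubmx_sym sP) (posdef_drsubmx sP pP).
Qed.

Lemma eq_iint (R : realType) (n : nat) (A : 'I_n -> set R) (g1 g2 : 'cV[R]_n -> \bar R) :
  (forall v : 'cV[R]_n, (forall i, A i (v i 0)) -> g1 v = g2 v) -> iint A g1 = iint A g2.
Proof.
elim: n A g1 g2 => [|n IH] A g1 g2 eq_g; first by apply: eq_g => -[].
apply: eq_integral => t /[1!inE] At; apply: IH => v Av; apply: eq_g => i.
case: (unliftP ord0 i) => [k ->|->].
  by move: (col_mxEd (t%:M : 'M[R]_1) v k 0); rewrite rshift1 => ->; exact: Av.
by move: (col_mxEu (t%:M : 'M[R]_1) v 0 0); rewrite lshift0 [_%:M _ _]mxE mulr1n => ->.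
Qed.

Lemma integral_gauss_kernel (R : realType) (s a c : R) : 0 < s -> 0 <= c ->
  (\int[@lebesgue_measure R]_(t in [set: R]) (c * expR (- (s * (t - a) ^+ 2) / 2))%:E
   = (c * Num.sqrt (pi *+ 2 / s))%:E)%E.
Proof.
move=> s_gt0 c_ge0; set sigma := (Num.sqrt s)^-1.
have sigma_neq0 : sigma != 0 by rewrite invr_eq0 sqrtr_eq0 -ltNge.
have peak_gt0 : 0 < Num.sqrt (pi *+ 2 / s).
  by rewrite sqrtr_gt0 divr_gt0 // mulrn_wgt0 // pi_gt0.
transitivity (\int[@lebesgue_measure R]_(t in [set: R])
    ((c * Num.sqrt (pi *+ 2 / s))%:E * (normal_pdf a sigma t)%:E))%E.
  apply: eq_integral => t _; rewrite -EFinM; congr EFin.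
  rewrite normal_pdfE // /normal_peak /normal_fun.
  have -> : sigma ^+ 2 = s^-1 by rewrite exprVn sqr_sqrtr ?ltW.
  have -> : s^-1 * pi *+ 2 = pi *+ 2 / s by rewrite mulrnAl mulrC -mulrnAl.
  rewrite -[RHS]mulrA mulVKf ?gt_eqF //.
  by congr (c * expR _); field; rewrite gt_eqF.
rewrite ge0_integralZl_EFin ?integral_normal_pdf ?mule1 ?mulr_ge0 ?sqrtr_ge0 //.
- by move=> t _; rewrite lee_fin normal_pdf_ge0.
- by apply/measurable_EFinP; exact: measurable_normal_pdf.
Qed.

Lemma iint_gauss_kernel (R : realType) (n : nat) (P : 'M[R]_n) (mu : 'cV[R]_n) (c : R) :
  P^T = P -> posdef P -> 0 <= c ->
  iint (fun _ => [set: R]) (fun x => (c * expR (- qform P (x - mu) / 2))%:E) =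
  (c * Num.sqrt ((pi *+ 2) ^+ n / \det P))%:E.
Proof.
elim: n P mu c => [|n IH] P mu c sP pP c_ge0.
  by rewrite /= (flatmx0 (0 - mu)) qform0 oppr0 mul0r expR0 det_mx00 divr1 sqrtr1 !mulr1.
set b := usubmx (mu : 'cV[R]_(1 + n)) 0 0; set D := drsubmx (P : 'M[R]_(1 + n)).
have sD : D^T = D by exact: drsubmx_sym.
have pD : posdef D by exact: posdef_drsubmx.
have schurP_gt0 : 0 < schur P by exact: schur_gt0.
have detD_gt0 : 0 < \det D by exact: posdef_det_gt0.
have inner t : iint (fun _ => [set: R])
      (fun v => (c * expR (- qform P (col_mx t%:M v - mu) / 2))%:E)
    = ((c * Num.sqrt ((pi *+ 2) ^+ n / \det D)) *
       expR (- (schur P * (t - b) ^+ 2) / 2))%:E.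
  have split_exp (x y : R) : c * expR (- (x + y) / 2) = c * expR (- x / 2) * expR (- y / 2).
    by rewrite -mulrA -expRD; congr (c * expR _); ring.
  under eq_iint => v _ do rewrite qform_col_mx_sub // split_exp.
  by rewrite IH ?mulr_ge0 ?expR_ge0 //; congr EFin; rewrite (mulrC (schur P)); ring.
rewrite /=; under eq_integral => t _ do rewrite inner.
rewrite integral_gauss_kernel //; last first.
  by rewrite mulr_ge0 ?sqrtr_ge0.
have pi2_gt0 : 0 < pi *+ 2 :> R by rewrite mulrn_wgt0 ?pi_gt0.
rewrite -mulrA -sqrtrM ?divr_ge0 ?exprn_ge0 ?ltW //.
rewrite (det_schur sP pP) exprS -/D; congr (c * Num.sqrt _)%:E.
by field; rewrite !gt_eqF.
Qed.

Lemma gauss_pdf_invmx (R : realType) (n : nat) (mu : 'cV[R]_n) (P : 'M[R]_n) x :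
  gauss_pdf mu (invmx P) x =
  (Num.sqrt ((pi *+ 2) ^+ n / \det P))^-1 * expR (- qform P (x - mu) / 2).
Proof. by rewrite /gauss_pdf invmxK det_inv. Qed.

Section GaussianLatentMachine.
Variables (R : realType) (m n : nat) (K : 'M[R]_(m, n)) (mu s2 f : 'I_m -> R -> R).
Variable z : 'cV[R]_m.
Hypothesis s2z_gt0 : forall i, 0 < s2 i (z i 0).

Lemma invmx_Sigma0 : invmx (Sigma0 s2 z) = diag_mx (\row_i (s2 i (z i 0))^-1).
Proof.
have Sigma0K : Sigma0 s2 z *m diag_mx (\row_i (s2 i (z i 0))^-1) = 1%:M.
  apply/matrixP => i j; rewrite /Sigma0 mulmx_diag !mxE.
  by rewrite divff // gt_eqF.
have [unitSigma0 _] := mulmx1_unit Sigma0K.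
by rewrite -[LHS]mulmx1 -Sigma0K mulKmx.
Qed.

Lemma trmx_invSigma0 : (invmx (Sigma0 s2 z))^T = invmx (Sigma0 s2 z).
Proof. by rewrite invmx_Sigma0 tr_diag_mx. Qed.

Lemma qform_invSigma0 (y : 'cV[R]_m) :
  qform (invmx (Sigma0 s2 z)) y = \sum_i y i 0 ^+ 2 / s2 i (z i 0).
Proof.
rewrite invmx_Sigma0 /qform /bform mul_mx_diag mxE; apply: eq_bigr => i _.
by rewrite !mxE expr2 mulrAC.
Qed.

Definition glm_prec : 'M[R]_n := K^T *m invmx (Sigma0 s2 z) *m K.

Lemma trmx_glm_prec : glm_prec^T = glm_prec.
Proof. exact/trmx_congr/trmx_invSigma0. Qed.

Hypothesis rankK : \rank K = n.

Lemma posdef_glm_prec : posdef glm_prec.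
Proof.
apply: posdef_congr rankK; rewrite invmx_Sigma0.
by apply: posdef_diag_mx => i; rewrite mxE invr_gt0.
Qed.

Hypothesis fz_ge0 : forall i, 0 <= f i (z i 0).

Lemma glm_weight_gauss : exists2 W, 0 <= W & forall x,
  glm_weight K mu s2 f x z = W * expR (- qform glm_prec (x - glm_mean K mu s2 z) / 2).
Proof.
set W0 := \prod_i (normal_peak (Num.sqrt (s2 i (z i 0))) * f i (z i 0)).
have W0_ge0 : 0 <= W0 by apply: prodr_ge0 => i _; rewrite mulr_ge0 ?normal_peak_ge0.
have weightE x : glm_weight K mu s2 f x z
    = W0 * expR (- qform (invmx (Sigma0 s2 z)) (K *m x - mu0 mu z) / 2).
  rewrite qform_invSigma0 mulNr mulr_suml -sumrN expR_sum -big_split /=.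
  apply: eq_bigr => i _; rewrite /gauss1_pdf normal_pdfE ?sqrtr_eq0 -?ltNge //=.
  rewrite /normal_fun sqr_sqrtr ?ltW // !mxE.
  by rewrite mulrAC; congr (_ * expR _); field; rewrite gt_eqF.
have unit_prec : glm_prec \in unitmx by exact/posdef_unitmx/posdef_glm_prec.
pose c := qform (invmx (Sigma0 s2 z)) (mu0 mu z) - qform glm_prec (glm_mean K mu s2 z).
exists (W0 * expR (- c / 2)) => [|x]; first by rewrite mulr_ge0 ?expR_ge0.
rewrite weightE qform_complete_square ?trmx_invSigma0 // -mulrA -expRD.
by congr (_ * expR _); rewrite /c /glm_mean /glm_cov /glm_prec; field.
Qed.

End GaussianLatentMachine.

Theorem corollary3p12 (R : realType) (m n : nat) (K : 'M[R]_(m, n))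
    (Zs : 'I_m -> set R) (f mu s2 : 'I_m -> R -> R) :
  (n <= m)%N ->
  \rank K = n ->
  (forall i, measurable (Zs i)) ->
  (forall i, measurable_fun (Zs i) (f i)) ->
  (forall i t, Zs i t -> 0 <= f i t) ->
  (forall i, (\int[@lebesgue_measure R]_(t in Zs i) (f i t)%:E = 1)%E) ->
  (forall i, measurable_fun (Zs i) (mu i)) ->
  (forall i, measurable_fun (Zs i) (s2 i)) ->
  (forall i t, Zs i t -> 0 < s2 i t) ->
  (0 < glm_mass K Zs mu s2 f < +oo)%E ->
  forall x : 'cV[R]_n,
    glm_marginal_X K Zs mu s2 f x =
    iint Zs (fun z => (glm_marginal_Z K Zs mu s2 f z *
                       (gauss_pdf (glm_mean K mu s2 z) (glm_cov K s2 z) x)%:E)%E).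
Proof.
(* The identity holds for each z separately. *)
move=> _ rankK _ _ f_ge0 _ _ _ s2_gt0 mass_fin x.
set M := fine (glm_mass K Zs mu s2 f).
have M_gt0 : 0 < M by exact: fine_gt0.
apply: eq_iint => z Zz.
have s2z_gt0 i : 0 < s2 i (z i 0) by exact: s2_gt0.
have fz_ge0 i : 0 <= f i (z i 0) by exact: f_ge0.
have [W W_ge0 weightE] := glm_weight_gauss mu s2z_gt0 rankK fz_ge0.
have symP := trmx_glm_prec K s2z_gt0.
have posP := posdef_glm_prec s2z_gt0 rankK.
have detP_gt0 := posdef_det_gt0 symP posP.
rewrite /glm_marginal_Z /glm_joint -/M.
under eq_iint => y _ do rewrite weightE mulrAC.
rewrite iint_gauss_kernel ?divr_ge0 ?(ltW M_gt0) //.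
rewrite weightE -EFinM gauss_pdf_invmx; congr EFin.
have sqrt_gt0 : 0 < Num.sqrt ((pi *+ 2) ^+ n / \det (glm_prec K s2 z)).
  by rewrite sqrtr_gt0 divr_gt0 // exprn_gt0 // mulrn_wgt0 // pi_gt0.
by field; rewrite !gt_eqF.
Qed.
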